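(* Let $n\ge1$, $x>0$ and $0<v\le nx$. Suppose $y,z\ge0$ satisfy $y+z=x$ and $\lfloor n/2\rfloor\, y+\lceil n/2\rceil\, z\le v$. Let $\boldsymbol v_{yz}\in\mathbb{R}^n$ have $i$-th coordinate $z$ if $i$ is odd and $y$ if $i$ is even, and let $\boldsymbol v_r\in\mathbb{R}^n$ have nonnegative coordinates with $\sum_i v_{r,i}=v-\lfloor n/2\rfloor y-\lceil n/2\rceil z$ and $v_{yz,i}+v_{r,i}\le x$ for all $i$. Then $\boldsymbol v^*=\boldsymbol v_{yz}+\boldsymbol v_r$ minimizes $f$ over $\Lambda(v)$, and $\min_{\boldsymbol v\in\Lambda(v)}f(\boldsymbol v)=f(\boldsymbol v^* )=nx-v$.
   Context: For $w>0$, $\Lambda(w)$ is the set of vectors in $\mathbb{R}^n$ with nonnegative coordinates summing to $w$. For $\boldsymbol v=(v_1,\dots,v_n)$, $f(\boldsymbol v)\equiv\sum_{1\le l\le k\le n}\bigl(x-\sum_{i=l}^k v_i\bigr)^+$, where $a^+=\max\{a,0\}$. (Such $y,z$ exist e.g. whenever $v\ge\lfloor n/2\rfloor x$, taking $y=x$, $z=0$.) *)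

From HB Require Import structures.
From mathcomp Require Import all_boot all_order all_algebra.
Set Implicit Arguments. Unset Strict Implicit. Unset Printing Implicit Defensive.
Import Order.TTheory GRing.Theory Num.Theory.
Local Open Scope ring_scope.

(* Vectors in R^n are functions 'I_n -> R; coordinate i (1-based in the
   paper) is index i-1 here. *)

Definition pos_part (R : realFieldType) (a : R) : R := Num.max a 0.

Definition Lambda (R : realFieldType) (n : nat) (w : R) : pred ('I_n -> R) :=
  fun v => [forall i, 0 <= v i] && (\sum_(i < n) v i == w).

Definition fobj (R : realFieldType) (n : nat) (x : R) (v : 'I_n -> R) : R :=
  \sum_(l < n) \sum_(k < n | (l <= k)%N)
     pos_part (x - \sum_(i < n | (l <= i <= k)%N) v i).

(* v_yz: coordinate i (1-based) is z if i odd, y if i even; in 0-based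
   index j = i-1, that is z if j is even, y if j is odd. *)
Definition v_yz (R : realFieldType) (n : nat) (y z : R) : 'I_n -> R :=
  fun j => if odd j then y else z.

Arguments Lambda {R} n w.
Arguments fobj {R n} x v.
Arguments v_yz {R n} y z.

From HB Require Import structures.
From mathcomp Require Import all_boot all_order all_algebra ring.
Import Order.TTheory GRing.Theory Num.Theory.
Local Open Scope ring_scope.

(* Separating the diagonal terms (l = k) of f gives
     f(w) = sum_l (x - w_l)^+ + (nonnegative off-diagonal terms)
          >= sum_l (x - w_l) = n x - sum_i w_i,
   so f >= n x - v on Lambda(v).  Equality holds for any nonnegative w with
   w_l <= x for every l (the diagonal terms are exactly x - w_l) and
   w_l + w_(l+1) >= x for every l (every window of length >= 2 contains such
   a pair, so the off-diagonal terms vanish).  The vector v_star = v_yz + v_r lies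
   in Lambda(v) because v_yz has coordinate sum floor(n/2) y + ceil(n/2) z,
   it satisfies w_l <= x by hypothesis, and consecutive coordinates of v_yz
   already sum to y + z = x. *)

Section PosPart.
Variable R : realFieldType.
Implicit Type a : R.

Lemma pos_part_ge0 a : 0 <= pos_part a.
Proof. by rewrite /pos_part le_max lexx orbT. Qed.

Lemma pos_part_ge a : a <= pos_part a.
Proof. by rewrite /pos_part le_max lexx. Qed.

Lemma pos_part_id a : 0 <= a -> pos_part a = a.
Proof. by move=> a_ge0; rewrite /pos_part max_l. Qed.

Lemma pos_part_eq0 a : a <= 0 -> pos_part a = 0.
Proof. by move=> a_le0; rewrite /pos_part max_r. Qed.

End PosPart.

Section Objective.
Variables (R : realFieldType) (n : nat) (x : R).
Implicit Type w : 'I_n -> R.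

Definition window w (l k : 'I_n) : R := \sum_(i < n | (l <= i <= k)%N) w i.

Lemma fobj_diag_split w :
  fobj x w = \sum_(l < n) (pos_part (x - w l) +
    \sum_(k < n | (l <= k)%N && (k != l)) pos_part (x - window w l k)).
Proof.
apply: eq_bigr => l _; rewrite (bigD1 l) //=; congr (pos_part (x - _) + _).
rewrite (eq_bigl (pred1 l)) ?big_pred1_eq // => i.
by rewrite /= -eqn_leq eq_sym.
Qed.

Lemma diag_sum w : n%:R * x - \sum_(i < n) w i = \sum_(l < n) (x - w l).
Proof. by rewrite sumrB sumr_const card_ord mulr_natl. Qed.

Lemma fobj_lower_bound w : n%:R * x - \sum_(i < n) w i <= fobj x w.
Proof.
rewrite fobj_diag_split diag_sum.
apply: ler_sum => l _; rewrite -{1}[x - w l]addr0.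
by apply: lerD; [exact: pos_part_ge | apply: sumr_ge0 => k _; exact: pos_part_ge0].
Qed.

Lemma window_ge_pair w {l k : 'I_n} (lk : (l < k)%N) :
  (forall i, 0 <= w i) ->
  w l + w (Ordinal (leq_ltn_trans lk (ltn_ord k))) <= window w l k.
Proof.
move=> w_ge0; set l1 := Ordinal _.
rewrite /window (bigD1 l) /=; last by rewrite leqnn ltnW.
rewrite (bigD1 l1) /=; last by rewrite leqnSn lk -val_eqE /= gtn_eqF.
by rewrite addrA lerDl; apply: sumr_ge0 => i _.
Qed.

Lemma fobj_eq_lower_bound w :
  (forall i, 0 <= w i) -> (forall i, w i <= x) ->
  (forall (l : 'I_n) (l1n : (l.+1 < n)%N), x <= w l + w (Ordinal l1n)) ->
  fobj x w = n%:R * x - \sum_(i < n) w i.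
Proof.
move=> w_ge0 w_lex pair_gex.
rewrite fobj_diag_split diag_sum.
apply: eq_bigr => l _; rewrite pos_part_id ?subr_ge0 // big1 ?addr0 //.
move=> k /andP[lk kl]; have lltk : (l < k)%N by rewrite ltn_neqAle eq_sym kl.
rewrite pos_part_eq0 // subr_le0.
exact: le_trans (pair_gex _ _) (window_ge_pair w lltk w_ge0).
Qed.

End Objective.

Section Alternating.
Variables (R : realFieldType) (y z : R).

Lemma sum_v_yz n : \sum_(i < n) v_yz y z i = (n./2)%:R * y + (uphalf n)%:R * z.
Proof.
elim: n => [|n IHn]; first by rewrite big_ord0 !mul0r addr0.
rewrite big_ord_recr /= (eq_bigr (fun i : 'I_n => v_yz y z i)) // IHn /v_yz /=.
rewrite !uphalf_half -addn1 !natrD.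
by case: (odd n); rewrite /= ?add0n; ring.
Qed.

Lemma v_yz_pair n (l : 'I_n) (l1n : (l.+1 < n)%N) :
  v_yz y z l + v_yz y z (Ordinal l1n) = y + z.
Proof. by rewrite /v_yz /=; case: (odd l); rewrite /= addrC. Qed.

End Alternating.

Theorem mainTheorem4 (R : realFieldType) (n : nat) (x v y z : R)
  (vr : 'I_n -> R) :
  (1 <= n)%N -> 0 < x -> 0 < v -> v <= n%:R * x ->
  0 <= y -> 0 <= z -> y + z = x ->
  (n./2)%:R * y + (uphalf n)%:R * z <= v ->
  (forall i, 0 <= vr i) ->
  \sum_(i < n) vr i = v - (n./2)%:R * y - (uphalf n)%:R * z ->
  (forall i, v_yz y z i + vr i <= x) ->
  let vstar := fun i => v_yz y z i + vr i in
  [/\ vstar \in Lambda n v,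
      (forall u : 'I_n -> R, u \in Lambda n v -> fobj x vstar <= fobj x u)
    & fobj x vstar = n%:R * x - v].
Proof.
move=> _ _ _ _ y_ge0 z_ge0 yzx _ vr_ge0 sum_vr vstar_lex vstar.
have vstar_ge0 i : 0 <= vstar i.
  by rewrite addr_ge0 // /v_yz; case: odd.
have sum_vstar : \sum_(i < n) vstar i = v.
  by rewrite big_split /= sum_v_yz sum_vr; ring.
have pair_gex (l : 'I_n) (l1n : (l.+1 < n)%N) :
    x <= vstar l + vstar (Ordinal l1n).
  rewrite /vstar addrACA v_yz_pair yzx lerDl.
  exact: addr_ge0.
have f_vstar : fobj x vstar = n%:R * x - v.
  by rewrite -sum_vstar fobj_eq_lower_bound.
split=> //; first by apply/andP; split; [apply/forallP | apply/eqP].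
move=> u /andP[_ /eqP sum_u]; rewrite f_vstar -sum_u.
exact: fobj_lower_bound.
Qed.
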